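(* Let $n\ge 3$ and $m\ge 1$ be integers, and let $Q_{n,1},\dots,Q_{n,m}$ be the partition of $\{0,1,\dots,m+1\}^n$ defined below. Then each $Q_{n,i}$ is a connected $n$-dimensional tile.
   Context: Define $f:\{0,\dots,m+1\}^3\to\{1,\dots,m\}$ by: $f(x,y,z)=y$ if $0\le x\le m$, $1\le y\le m$, $z=0$; $f=x$ if $1\le x\le m$, $0\le y\le m$, $z=m+1$; $f=y$ if $x=0$, $1\le y\le m$, $1\le z\le m$; $f=x$ if $1\le x\le m$, $y=0$, $1\le z\le m$; $f=z$ if $1\le x\le m+1$, $1\le y\le m+1$, $1\le z\le m$; and $f=1$ at all remaining points. Let $f_3=f$ and for $n\ge4$: $f_n(x_1,\dots,x_n)=f_{n-1}(x_1,x_2,x_3,\dots,x_{n-1})$ if $0\le x_n\le m$, and $f_n(x_1,\dots,x_n)=f_{n-1}(m+1-x_2,x_1,x_3,\dots,x_{n-1})$ if $x_n=m+1$. Let $Q_{n,i}=\{x\in\{0,\dots,m+1\}^n: f_n(x)=i\}$. An $n$-dimensional tile is a non-empty finite subset of $\mathbb{Z}^n$; two disjoint sets are adjacent if some $p$ in the first and $q$ in the second satisfy $p+v=q$ for a unit vector $v$ parallel to an axis; a tile is connected if it cannot be partitioned into two non-adjacent sets. *)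

From mathcomp Require Import all_boot.
Set Implicit Arguments. Unset Strict Implicit. Unset Printing Implicit Defensive.

Definition f3 (m x y z : nat) : nat :=
  if [&& x <= m, 1 <= y <= m & z == 0] then y
  else if [&& 1 <= x <= m, y <= m & z == m.+1] then x
  else if [&& x == 0, 1 <= y <= m & 1 <= z <= m] then y
  else if [&& 1 <= x <= m, y == 0 & 1 <= z <= m] then x
  else if [&& 1 <= x <= m.+1, 1 <= y <= m.+1 & 1 <= z <= m] then z
  else 1.

(* f_n on a point given by its coordinates x_1,...,x_n stored as
   x 0, ..., x (n-1).  Only meaningful for n >= 3. *)
Fixpoint fn (m n : nat) (x : nat -> nat) : nat :=
  match n with
  | 0 | 1 | 2 => 1
  | 3 => f3 m (x 0) (x 1) (x 2)
  | k.+1 =>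
      if x k <= m then fn m k x
      else fn m k (fun j => if j == 0 then m.+1 - x 1
                            else if j == 1 then x 0 else x j)
  end.

Definition point (n m : nat) := {ffun 'I_n -> 'I_(m.+2)}.

Definition coords n m (p : point n m) : nat -> nat :=
  fun k => if insub k is Some i then nat_of_ord (p i) else 0.

Definition Q (n m i : nat) : {set point n m} :=
  [set p : point n m | fn m n (coords p) == i].

Definition adjacent_pts n m (p q : point n m) : Prop :=
  exists j : 'I_n, (((p j : nat).+1 == q j) || ((q j : nat).+1 == p j))
                   /\ forall k, k != j -> p k = q k.

Definition adjacent_sets n m (A B : {set point n m}) : Prop :=
  exists p q, [/\ p \in A, q \in B & adjacent_pts p q].

(* a tile is a non-empty finite subset; finiteness is automatic here *)
Definition is_tile n m (A : {set point n m}) : Prop := A != set0.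

Definition tile_connected n m (A : {set point n m}) : Prop :=
  forall B C : {set point n m},
    B :|: C = A -> [disjoint B & C] -> B != set0 -> C != set0 ->
    adjacent_sets B C.

(* Q_{n,i} is connected by induction on n, every point being joined to the root
   (1,1,i,0,...,0) by a walk of unit steps inside Q_{n,i}.  For n = 3 the walks are
   explicit chains of axis-parallel segments ending in the square layer z = i.  In
   dimension n+1, a point with x_{n+1} <= m lies in a slab that is a copy of Q_{n,i},
   so it is joined to (1,1,i,0,...,0,x_{n+1}) and then down the last axis to the root.
   A point with x_{n+1} = m+1 lies in the top slab, which is the image of Q_{n,i} under
   the inverse of the rotation (x_1,x_2) |-> (m+1-x_2,x_1); the image of the root is
   (1,m,i,0,...,0,m+1), joined to the root by the segment along the last axis and the
   segment x_2 = m..1.  Finally, a set whose points are all walked to one root cannot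
   be split into two non-adjacent parts: some walk has to cross from one part to the
   other. *)

From mathcomp Require Import all_boot zify.
From Stdlib Require Import Relations.
Set Implicit Arguments. Unset Strict Implicit. Unset Printing Implicit Defensive.

Local Arguments rst_step {A R x y}.
Local Arguments rst_sym {A R x y}.
Local Arguments rst_trans {A R x} y {z}.
Local Arguments clos_rst_rst1n {A R x y}.

Lemma clos_rst_map (A B : Type) (R : relation A) (S : relation B) (g : A -> B) :
  (forall x y, R x y -> clos_refl_sym_trans B S (g x) (g y)) ->
  forall x y, clos_refl_sym_trans A R x y -> clos_refl_sym_trans B S (g x) (g y).
Proof.
move=> gR x y; elim=> [a b /gR // | a | a b _ IH | a b c _ IH1 _ IH2].
- exact: rst_refl.
- exact: rst_sym.
- exact: rst_trans _ IH1 IH2.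
Qed.

Section TileWalks.

Variables n m : nat.
Implicit Types (A B C : {set point n m}) (p q r : point n m).

Lemma adjacent_pts_sym p q : adjacent_pts p q -> adjacent_pts q p.
Proof.
case=> j [pq_j pq_k]; exists j; split; first by rewrite orbC.
by move=> k /pq_k ->.
Qed.

Definition walk A :=
  clos_refl_sym_trans (point n m) (fun p q => [/\ p \in A, q \in A & adjacent_pts p q]).

Lemma walk_adjacent_sets A B C p q : B :|: C = A -> [disjoint B & C] ->
  walk A p q -> p \in B -> q \in C -> adjacent_sets B C.
Proof.
move=> BC_A dBC pq; elim: {pq}(clos_rst_rst1n pq) => [{}p | {}p z {}q pz _ IH] pB.
  by rewrite (disjointFr dBC pB).
have [zA adj_pz] : z \in A /\ adjacent_pts p z.
  by case: pz => [[_ zA adj] | [zA _ /adjacent_pts_sym adj]].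
move: zA; rewrite -BC_A in_setU => /orP[/IH // | zC _].
by exists p, z.
Qed.

Lemma tile_connected_of_walks A r :
  (forall p, p \in A -> walk A p r) -> tile_connected A.
Proof.
move=> walk_r B C BC_A dBC /set0Pn[b bB] /set0Pn[c cC].
have inA p : p \in B :|: C -> p \in A by rewrite BC_A.
apply: (walk_adjacent_sets BC_A dBC _ bB cC).
apply: rst_trans _ (walk_r b _) (rst_sym (walk_r c _)); apply: inA.
  by rewrite in_setU bB.
by rewrite in_setU cC orbT.
Qed.

End TileWalks.

Section Coordinates.

Variable m : nat.
Implicit Types (n i j k a b c t : nat) (x y z : nat -> nat).

Definition upd x j t : nat -> nat := fun k => if k == j then t else x k.

Definition rot x : nat -> nat :=
  fun k => if k == 0 then m.+1 - x 1 else if k == 1 then x 0 else x k.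

Definition unrot x : nat -> nat :=
  fun k => if k == 0 then x 1 else if k == 1 then m.+1 - x 0 else x k.

Definition p3 a b c : nat -> nat :=
  fun k => if k == 0 then a else if k == 1 then b else if k == 2 then c else 0.

Lemma p3_high a b c k : 2 < k -> p3 a b c k = 0.
Proof. by rewrite /p3; case: k => [|[|[|]]]. Qed.

Ltac coord_lia := rewrite /upd /rot /unrot /p3; repeat (case: eqP => ?; subst); try lia.

Definition eq_on n x y := forall k, k < n -> x k = y k.

Definition in_box n x := forall k, k < n -> x k <= m.+1.

Definition fiber n i x := in_box n x /\ fn m n x = i.

(* The step j may leave x and y equal on the first n coordinates, so walks can change
   the irrelevant coordinates beyond n for free. *)
Definition near n x y := exists2 j, j < n &
  [/\ x j <= (y j).+1, y j <= (x j).+1 & forall k, k < n -> k != j -> x k = y k].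

Definition linked n i :=
  clos_refl_sym_trans (nat -> nat) (fun x y => [/\ fiber n i x, fiber n i y & near n x y]).

Lemma fnS n x : 3 <= n -> fn m n.+1 x = if x n <= m then fn m n x else fn m n (rot x).
Proof. by case: n => [|[|[|[|n]]]]. Qed.

Lemma fn_eq_on n x y : eq_on n x y -> fn m n x = fn m n y.
Proof.
elim: n x y => [|n IH] x y xy //.
have [n_lt3|n_ge3] := ltnP n 3.
  case: n n_lt3 IH xy => [|[|[|n]]] // _ _ xy.
  by rewrite /= (xy 0) // (xy 1) // (xy 2).
rewrite !fnS // (xy n) //; case: ifP => _; apply: IH => k k_lt_n.
  by apply: xy; lia.
by rewrite /rot !xy //; lia.
Qed.

Lemma fn_low n x : 3 <= n -> (forall k, 3 <= k < n -> x k <= m) ->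
  fn m n x = f3 m (x 0) (x 1) (x 2).
Proof.
elim: n => [|n IH] // n_ge3 low.
have [n_lt3|{}n_ge3] := ltnP n 3; first by case: n n_lt3 IH low n_ge3 => [|[|[|n]]].
rewrite fnS // ifT; last by apply: low; lia.
by apply: IH => // k k_n; apply: low; lia.
Qed.

Lemma fiber_low n i x : 3 <= n -> in_box n x -> (forall k, 3 <= k < n -> x k <= m) ->
  f3 m (x 0) (x 1) (x 2) = i -> fiber n i x.
Proof. by move=> n_ge3 box low f3x; split; rewrite // fn_low. Qed.

Ltac f3_lia :=
  rewrite /f3; repeat match goal with |- context [if ?c then _ else _] => destruct c eqn:? end; lia.

Ltac by_fiber_low :=
  apply: fiber_low;
  [ lia | move=> k ?; coord_lia | move=> k ?; coord_lia | rewrite /upd /p3 /=; f3_lia ].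

Lemma fiber_eq_on n i x y : fiber n i x -> eq_on n x y -> fiber n i y.
Proof.
move=> [box fx] xy; split; last by rewrite -(fn_eq_on xy).
by move=> k k_n; rewrite -xy //; apply: box.
Qed.

Lemma linked_eq_on n i x y : 0 < n -> fiber n i x -> eq_on n x y -> linked n i x y.
Proof.
move=> n_gt0 fib_x xy; apply: rst_step; split; [done | exact: fiber_eq_on xy |].
by exists 0 => //; rewrite (xy 0) //; split=> // k /xy.
Qed.

Lemma linked_map (g : (nat -> nat) -> nat -> nat) n n' i :
  (forall x, fiber n i x -> fiber n' i (g x)) ->
  (forall x y, near n x y -> near n' (g x) (g y)) ->
  forall x y, linked n i x y -> linked n' i (g x) (g y).
Proof.
move=> gF gN; apply: clos_rst_map => x y [fx fy xy].
by apply: rst_step; split; [exact: gF | exact: gF | exact: gN].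
Qed.

Lemma linked_axis n i x y j : j < n ->
  (forall k, k < n -> k != j -> x k = y k) ->
  (forall t, minn (x j) (y j) <= t <= maxn (x j) (y j) -> fiber n i (upd x j t)) ->
  linked n i x y.
Proof.
move=> j_n xy_off seg.
have up a d : minn (x j) (y j) <= a -> a + d <= maxn (x j) (y j) ->
    linked n i (upd x j a) (upd x j (a + d)).
  elim: d => [|d IH] lo hi; first by rewrite addn0; apply: rst_refl.
  apply: rst_trans _ (IH lo _) (rst_step _); first lia.
  rewrite addnS; split; [apply: seg; lia | apply: seg; lia | exists j => //].
  by rewrite /upd eqxx; split=> [||k _ /negbTE ->] //; lia.
have ends : linked n i (upd x j (x j)) (upd x j (y j)).
  have [le|/ltnW le] := leqP (x j) (y j).
    by have := up (x j) (y j - x j); rewrite subnKC //; apply; lia.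
  by apply: rst_sym; have := up (y j) (x j - y j); rewrite subnKC //; apply; lia.
have fib_x : fiber n i (upd x j (x j)) by apply: seg; lia.
have fib_y : fiber n i (upd x j (y j)) by apply: seg; lia.
have x_fx : linked n i x (upd x j (x j)).
  apply: rst_sym; apply: linked_eq_on fib_x _ => [|k _]; first lia.
  by rewrite /upd; case: eqP => [->|].
have fy_y : linked n i (upd x j (y j)) y.
  apply: linked_eq_on fib_y _ => [|k k_n]; first lia.
  by rewrite /upd; case: eqP => [->|/eqP /xy_off ->].
exact: rst_trans _ (rst_trans _ x_fx ends) fy_y.
Qed.

Lemma fiber_layer n i a b : 1 <= i <= m -> 3 <= n -> 1 <= a <= m.+1 -> 1 <= b <= m.+1 ->
  fiber n i (p3 a b i).
Proof. by move=> *; by_fiber_low. Qed.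

(* [via w] walks in a straight line to the waypoint [w], checking that every point of
   the segment lies in the fiber by evaluating [f3]. *)
Ltac leg_along j :=
  apply: (@linked_axis _ _ _ _ j); rewrite /p3 /=;
  [ done
  | by move=> k k_lt3 k_j; coord_lia
  | move=> t t_seg; split; [by move=> k k_lt3; coord_lia | rewrite /upd /=; f3_lia] ].

Ltac leg := first [ leg_along 0 | leg_along 1 | leg_along 2 ].

Ltac via w := apply: (rst_trans w); first leg.

Lemma linked3_layer i a b : 1 <= i <= m -> 1 <= a <= m.+1 -> 1 <= b <= m.+1 ->
  linked 3 i (p3 a b i) (p3 1 1 i).
Proof. by move=> *; via (p3 1 b i); leg. Qed.

Lemma linked3_root i a b c : 1 <= i <= m -> a <= m.+1 -> b <= m.+1 -> c <= m.+1 ->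
  f3 m a b c = i -> linked 3 i (p3 a b c) (p3 1 1 i).
Proof.
move=> i_m a_m b_m c_m; rewrite {1}/f3.
case: ifP => [bottom <-|not_bottom].
  have -> : c = 0 by lia.
  by via (p3 0 b 0); via (p3 0 b b); via (p3 1 b b); apply: linked3_layer; lia.
case: ifP => [top <-|not_top].
  have -> : c = m.+1 by lia.
  by via (p3 a 0 m.+1); via (p3 a 0 a); via (p3 a 1 a); apply: linked3_layer; lia.
case: ifP => [side_x <-|not_side_x].
  have -> : a = 0 by lia.
  by via (p3 0 b b); via (p3 1 b b); apply: linked3_layer; lia.
case: ifP => [side_y <-|not_side_y].
  have -> : b = 0 by lia.
  by via (p3 a 0 a); via (p3 a 1 a); apply: linked3_layer; lia.
case: ifP => [inner <-|outer]; first by apply: linked3_layer; lia.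
move=> <-.
have edge0 u : u <= m.+1 -> linked 3 1 (p3 0 0 u) (p3 1 1 1).
  by move=> u_m; via (p3 0 0 1); via (p3 0 1 1); leg.
have edgeM : linked 3 1 (p3 m.+1 0 1) (p3 1 1 1).
  by via (p3 m.+1 1 1); apply: linked3_layer; lia.
have [c0|[cM|c_mid]] : c = 0 \/ c = m.+1 \/ 1 <= c <= m by lia.
- subst c.
  have [b0|[bM|[b_mid aM]]] : b = 0 \/ b = m.+1 \/ 1 <= b <= m /\ a = m.+1 by lia.
  + by subst b; via (p3 0 0 0); apply: edge0.
  + by subst b; via (p3 m.+1 m.+1 0); via (p3 m.+1 m.+1 1); apply: linked3_layer; lia.
  + by subst a; via (p3 m.+1 b 1); apply: linked3_layer; lia.
- subst c.
  have [a0|[aM|bM]] : a = 0 \/ a = m.+1 \/ b = m.+1 by lia.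
  + by subst a; via (p3 0 0 m.+1); apply: edge0.
  + by subst a; via (p3 m.+1 0 m.+1); via (p3 m.+1 0 1); apply: edgeM.
  + by subst b; via (p3 0 m.+1 m.+1); via (p3 0 0 m.+1); apply: edge0.
- have [[-> ->]|[[-> ->]|[-> ->]]] :
    a = 0 /\ b = 0 \/ a = 0 /\ b = m.+1 \/ a = m.+1 /\ b = 0 by lia.
  + exact: edge0.
  + by via (p3 0 m.+1 1); via (p3 1 m.+1 1); apply: linked3_layer; lia.
  + by via (p3 m.+1 0 1); apply: edgeM.
Qed.

(* [fn m n.+1] reads a point of the top slab through [rot], which undoes [unrot]. *)
Definition lift_top n y := upd (unrot y) n m.+1.

Lemma fiber_upd_low n i y c : 3 <= n -> c <= m -> fiber n i y -> fiber n.+1 i (upd y n c).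
Proof.
move=> n_ge3 c_m [box fy]; split.
  by move=> k k_n; have := box k; rewrite /upd; case: eqP => k_n'; lia.
rewrite fnS // {1}/upd eqxx c_m -fy; apply: fn_eq_on => k k_n.
by rewrite /upd (ltn_eqF k_n).
Qed.

Lemma near_upd n y z c : near n y z -> near n.+1 (upd y n c) (upd z n c).
Proof.
case=> j j_n [yz zy off]; exists j; first lia.
rewrite /upd (ltn_eqF j_n); split=> // k k_n k_j.
by case: eqP => // /eqP k_n'; apply: off => //; lia.
Qed.

Lemma linked_upd_low n i y z c : 3 <= n -> c <= m ->
  linked n i y z -> linked n.+1 i (upd y n c) (upd z n c).
Proof.
move=> n_ge3 c_m; apply: (linked_map (g := fun y => upd y n c)) => [x|x x'].
  exact: fiber_upd_low.
exact: near_upd.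
Qed.

Lemma fiber_lift_top n i y : 3 <= n -> fiber n i y -> fiber n.+1 i (lift_top n y).
Proof.
move=> n_ge3 [box fy]; have := box 0; have := box 1 => y1 y0; split.
  by move=> k k_n; have := box k; rewrite /lift_top; coord_lia.
rewrite fnS // {1}/lift_top /upd eqxx ltnn -fy; apply: fn_eq_on => k k_n.
by rewrite /lift_top; coord_lia.
Qed.

Lemma near_unrot n y z : 2 <= n -> near n y z -> near n (unrot y) (unrot z).
Proof.
move=> n_ge2 [j j_n [yz zy off]].
have [j0|[j1|j_gt1]] : j = 0 \/ j = 1 \/ 1 < j by lia.
- subst j; exists 1 => //; rewrite /unrot /=; split; [lia | lia |].
  by move=> k k_n k_1; have := off k k_n; have := off 1; coord_lia.
- subst j; exists 0; rewrite /unrot /=; [lia | split; [lia | lia |]].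
  by move=> k k_n k_0; have := off k k_n; have := off 0; coord_lia.
- exists j => //; rewrite /unrot (gtn_eqF j_gt1) (gtn_eqF (ltnW j_gt1)); split=> //.
  by move=> k k_n k_j; have := off k k_n; have := off 0; have := off 1; coord_lia.
Qed.

Lemma near_lift_top n y z : 2 <= n -> near n y z -> near n.+1 (lift_top n y) (lift_top n z).
Proof. by move=> n_ge2 yz; apply: near_upd; apply: near_unrot. Qed.

Lemma linked_lift_top n i y z : 3 <= n ->
  linked n i y z -> linked n.+1 i (lift_top n y) (lift_top n z).
Proof.
move=> n_ge3; apply: linked_map => [x|x x'].
  exact: fiber_lift_top.
by apply: near_lift_top; lia.
Qed.

Section InductiveStep.

Variables (n i : nat).
Hypotheses (i_m : 1 <= i <= m) (n_ge3 : 3 <= n).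
Hypothesis linked_root_n : forall y, fiber n i y -> linked n i y (p3 1 1 i).

Lemma linked_root_low x : fiber n.+1 i x -> x n <= m -> linked n.+1 i x (p3 1 1 i).
Proof.
move=> [box fx] xn_m.
have fib_x : fiber n i x.
  by split; [move=> k k_n; apply: box; lia | rewrite -fx fnS // xn_m].
apply: (rst_trans (upd x n (x n))).
  by apply: linked_eq_on (conj box fx) _ => // k _; rewrite /upd; case: eqP => [->|].
apply: (rst_trans (upd (p3 1 1 i) n (x n))); first exact: linked_upd_low (linked_root_n fib_x).
apply: rst_sym; apply: (@linked_axis _ _ _ _ n) => //.
- by move=> k k_n k_n'; rewrite /upd (negbTE k_n').
- move=> t; rewrite /upd eqxx p3_high // => t_seg.
  by apply: fiber_upd_low; [| lia | apply: fiber_layer].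
Qed.

Lemma linked_root_top x : fiber n.+1 i x -> m < x n -> linked n.+1 i x (p3 1 1 i).
Proof.
move=> [box fx] xn_m.
have := box n (ltnSn n); have := box 0; have := box 1 => x1 x0 xn.
have fib_rot : fiber n i (rot x).
  split; last by rewrite -fx fnS // leqNgt xn_m.
  by move=> k k_n; have := box k; coord_lia.
have fib_top : fiber n.+1 i (lift_top n (p3 1 1 i)).
  by apply: fiber_lift_top; last apply: fiber_layer.
apply: (rst_trans (lift_top n (rot x))).
  apply: rst_sym; apply: linked_eq_on (fiber_lift_top n_ge3 fib_rot) _ => // k k_n.
  by rewrite /lift_top; coord_lia.
apply: (rst_trans (lift_top n (p3 1 1 i))); first exact: linked_lift_top (linked_root_n fib_rot).
apply: (rst_trans (p3 1 m i)).
  apply: rst_sym; apply: (@linked_axis _ _ _ _ n) => //.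
    by move=> k k_n k_n'; rewrite /lift_top; coord_lia.
  move=> t; rewrite p3_high // {1 2}/lift_top {1 2}/upd eqxx => t_seg.
  have [t_m|t_M] := leqP t m.
    by apply: fiber_upd_low; [| lia | apply: fiber_layer; lia].
  by apply: fiber_eq_on fib_top _ => k k_n; rewrite /lift_top; coord_lia.
apply: (@linked_axis _ _ _ _ 1); [lia | by move=> k k_n k_1; coord_lia |].
by move=> t; rewrite /p3 /= => t_seg; by_fiber_low.
Qed.

End InductiveStep.

Lemma linked_root n i x : 1 <= i <= m -> 3 <= n -> fiber n i x -> linked n i x (p3 1 1 i).
Proof.
move=> i_m; elim: n x => [|n IH] x // n_ge3 fib_x.
have [n_lt3|{}n_ge3] := ltnP n 3.
  have n2 : n = 2 by lia.
  subst n; have [box fx] := fib_x.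
  apply: (rst_trans (p3 (x 0) (x 1) (x 2))).
    by apply: (linked_eq_on _ fib_x) => // -[|[|[|k]]].
  by apply: linked3_root => //; apply: box.
have [xn_m|xn_M] := leqP (x n) m.
  exact: (linked_root_low i_m n_ge3 (IH^~ n_ge3)).
exact: (linked_root_top i_m n_ge3 (IH^~ n_ge3)).
Qed.

End Coordinates.

Section Points.

Variables n m : nat.
Implicit Types (i : nat) (x y : nat -> nat) (p : point n m).

Definition point_of x : point n m := [ffun j : 'I_n => inord (x j)].

Lemma point_of_val x (j : 'I_n) : x j <= m.+1 -> point_of x j = x j :> nat.
Proof. by move=> xj; rewrite ffunE inordK. Qed.

Lemma point_of_coords p : point_of (coords p) = p.
Proof.
by apply/ffunP => j; apply: val_inj; rewrite /= point_of_val /coords valK // -ltnS.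
Qed.

Lemma coords_fiber i p : p \in Q n m i -> fiber m n i (coords p).
Proof.
rewrite inE => /eqP fp; split=> // k k_n.
by rewrite /coords (insubT (fun k => k < n) k_n) -ltnS.
Qed.

Lemma mem_Q_point_of i x : fiber m n i x -> point_of x \in Q n m i.
Proof.
case=> box fx; rewrite inE -fx; apply/eqP/fn_eq_on => k k_n.
by rewrite /coords (insubT (fun k => k < n) k_n) point_of_val //; apply: box.
Qed.

Lemma walk_point_of i x y : linked m n i x y -> walk (Q n m i) (point_of x) (point_of y).
Proof.
apply: clos_rst_map => {}x {}y [fx fy [j j_n [xy yx off]]].
have [/eqP xy_j | xy_j] := boolP (x j == y j).
  suff -> : point_of x = point_of y by apply: rst_refl.
  apply/ffunP => k; rewrite !ffunE; case: (eqVneq (k : nat) j) => [-> | /off -> //].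
  by rewrite xy_j.
apply: rst_step; split; [exact: mem_Q_point_of | exact: mem_Q_point_of |].
exists (Ordinal j_n); split.
  by rewrite !point_of_val /=; [lia | exact: fy.1 | exact: fx.1].
by move=> k k_j; apply/val_inj; rewrite /= !ffunE off.
Qed.

End Points.

Theorem lemma5p2 (n m : nat) : 3 <= n -> 1 <= m ->
  forall i : nat, 1 <= i <= m -> is_tile (Q n m i) /\ tile_connected (Q n m i).
Proof.
move=> n_ge3 _ i i_m.
have root_Q : point_of n m (p3 1 1 i) \in Q n m i by apply/mem_Q_point_of/fiber_layer.
split; first by apply/set0Pn; exists (point_of n m (p3 1 1 i)).
apply: (@tile_connected_of_walks _ _ _ (point_of n m (p3 1 1 i))) => p p_Q.
rewrite -(point_of_coords p); apply: walk_point_of; apply: linked_root => //.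
exact: coords_fiber.
Qed.
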